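(* Let $R$ be a unital associative ring and let $J=J_2\circ J_1$ act on $M_2(R)$. Then ${\rm dom}(J)={\rm dom}(J^{-1})=M_2^*(R)\cap M_2^\star(R)$, and $J$ maps ${\rm dom}(J)$ bijectively onto itself according to the formula $$J(A)=\begin{pmatrix} a-bd^{-1}c & b-ac^{-1}d\\ c-db^{-1}a & d-ca^{-1}b\end{pmatrix},\qquad A=\begin{pmatrix} a&b\\ c&d\end{pmatrix}\in M_2^\star(R)\cap M_2^*(R).$$ Furthermore, $J(A)\sim J^{-1}(A)$ for each $A\in{\rm dom}(J)$, and $A\in{\rm dom}(J)={\rm dom}(J^{-1})$ if and only if $a,b,c,d,db^{-1}-ca^{-1}\in R^*$.
   Context: $R^*$ denotes the units of $R$. $M_n^*(R)$ is the set of invertible $n\times n$ matrices over $R$, $M_n^\star(R)$ the set of $n\times n$ matrices with all entries in $R^*$. $J_1(M)=M^{-1}$ on $M_n^*(R)$; $J_2(M)_{jk}=(M_{kj})^{-1}$ on $M_n^\star(R)$. Compositions $g\circ f$ have domain $\{x\in{\rm dom}(f):f(x)\in{\rm dom}(g)\}$. $J^{-1}:=J_1\circ J_2$. For $A,B\in M_n(R)$, $A\sim B$ means $B=D_1^{-1}AD_2$ for some invertible diagonal matrices $D_1,D_2$. *)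

From HB Require Import structures.
From mathcomp Require Import all_boot all_order all_algebra.
From Stdlib Require Import ClassicalEpsilon.
Set Implicit Arguments. Unset Strict Implicit. Unset Printing Implicit Defensive.
Import Order.TTheory GRing.Theory.
Local Open Scope ring_scope.

Section J.
Variable R : unitRingType.

Definition is_inv (A B : 'M[R]_2) : Prop := A *m B = 1%:M /\ B *m A = 1%:M.

(* A \in M_2^*(R) *)
Definition invertible2 (A : 'M[R]_2) : Prop := exists B, is_inv A B.

(* A \in M_2^\star(R): all entries are units *)
Definition allunits2 (A : 'M[R]_2) : bool :=
  [forall i, [forall j, A i j \is a GRing.unit]].

Definition J1 (A : 'M[R]_2) : option 'M[R]_2 :=
  match excluded_middle_informative (invertible2 A) with
  | left h => Some (proj1_sig (constructive_indefinite_description _ h))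
  | right _ => None
  end.

Definition J2 (A : 'M[R]_2) : option 'M[R]_2 :=
  if allunits2 A then Some (\matrix_(j, k) (A k j)^-1) else None.

Definition J (A : 'M[R]_2) : option 'M[R]_2 := obind J2 (J1 A).
Definition Jinv (A : 'M[R]_2) : option 'M[R]_2 := obind J1 (J2 A).

Definition dom (f : 'M[R]_2 -> option 'M[R]_2) (A : 'M[R]_2) : Prop :=
  exists B, f A = Some B.

Definition dsim (A B : 'M[R]_2) : Prop :=
  exists D1 D1' D2 : 'M[R]_2,
    [/\ is_diag_mx D1, is_diag_mx D2, is_inv D1 D1', invertible2 D2
      & B = D1' *m A *m D2].

End J.

From HB Require Import structures.
From mathcomp Require Import all_boot all_order all_algebra.
From Stdlib Require Import ClassicalEpsilon.
Set Implicit Arguments. Unset Strict Implicit. Unset Printing Implicit Defensive.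
Import Order.TTheory GRing.Theory.
Local Open Scope ring_scope.

(* Over a noncommutative ring, 2x2 block elimination says: if a is a unit,
   A = [a b; c d] is invertible iff its Schur complement d - c a^-1 b is, and
   then the (1,1) entry of A^-1 is its inverse.  Permuting rows and columns gives
   the other three entries, so when all entries of A are units, so are those of
   A^-1, and J(A) is the displayed matrix.  As d b^-1 - c a^-1 equals
   (d - c a^-1 b) b^-1, and the same expression for J_2(A) is
   -d^-1 (d b^-1 - c a^-1) a, invertibility of A and of J_2(A) are equivalent on
   matrices with unit entries; this yields dom J = dom J^-1 and the bijectivity.
   Computing J^-1(A) by the same formula, the columns of J(A) and J^-1(A) differ
   by a right scalar factor, hence J(A) ~ J^-1(A). *)

Section RightInverse2.
Variable R : unitRingType.
Implicit Types a b c d x y z w : R.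

(* [x y; z w] is a right inverse of [a b; c d]. *)
Definition rinv2 a b c d x y z w :=
  [/\ a * x + b * z = 1, a * y + b * w = 0, c * x + d * z = 0 & c * y + d * w = 1].

Lemma rinv2_swap_rows a b c d x y z w :
  rinv2 a b c d x y z w -> rinv2 c d a b y x w z.
Proof. by case. Qed.

Lemma rinv2_swap_cols a b c d x y z w :
  rinv2 a b c d x y z w -> rinv2 b a d c z w x y.
Proof. by case=> e1 e2 e3 e4; split; rewrite addrC. Qed.

Lemma rinv2_schur_corner a b c d x y z w : a \is a GRing.unit ->
  rinv2 a b c d x y z w -> rinv2 x y z w a b c d ->
  w \is a GRing.unit /\ w^-1 = d - c * a^-1 * b.
Proof.
move=> Ua [_ e2 _ e4] [_ _ f3 f4].
have Ey : y = - (a^-1 * b * w).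
  by rewrite -(mulKr Ua y); move/eqP: e2; rewrite addr_eq0 => /eqP ->; rewrite mulrN !mulrA.
have Ez : z = - (w * c * a^-1).
  by rewrite -(mulrK Ua z); move/eqP: f3; rewrite addr_eq0 => /eqP ->; rewrite mulNr.
have Sw : (d - c * a^-1 * b) * w = 1 by rewrite -e4 Ey mulrBl mulrN !mulrA addrC.
have wS : w * (d - c * a^-1 * b) = 1 by rewrite -f4 Ez mulrBr mulNr !mulrA addrC.
have Uw : w \is a GRing.unit by apply/unitrP; exists (d - c * a^-1 * b).
by split=> //; rewrite -[d - _](mulKr Uw) wS mulr1.
Qed.

Lemma rinv2_schur a b c d : a \is a GRing.unit ->
  d - c * a^-1 * b \is a GRing.unit ->
  let w := (d - c * a^-1 * b)^-1 in
  let x := a^-1 + a^-1 * b * w * c * a^-1 in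
  let y := - (a^-1 * b * w) in let z := - (w * c * a^-1) in
  rinv2 a b c d x y z w /\ rinv2 x y z w a b c d.
Proof.
move=> Ua Us w x y z.
have sw : (d - c * a^-1 * b) * w = 1 by rewrite mulrV.
have ws : w * (d - c * a^-1 * b) = 1 by rewrite mulVr.
split; split.
- by rewrite /x /z mulrDr ?mulrA mulrV // mul1r mulrN ?mulrA addrK.
- by rewrite /y mulrN ?mulrA mulrV // mul1r addNr.
- have E : (d - c * a^-1 * b) * w * c * a^-1 = c * a^-1 by rewrite sw mul1r.
  rewrite !mulrBl ?mulrA in E.
  by rewrite /x /z mulrDr mulrN ?mulrA -{1}E subrK subrr.
- by rewrite /y mulrN ?mulrA addrC -sw mulrBl ?mulrA.
- by rewrite /x /y mulrDl ?mulrA mulVr // mulNr ?mulrA divrK // addrK.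
- have E : a^-1 * b * w * (d - c * a^-1 * b) = a^-1 * b by rewrite -mulrA ws mulr1.
  rewrite !mulrBr ?mulrA in E.
  by rewrite /x /y mulrDl mulNr ?mulrA -{1}E subrK subrr.
- by rewrite /z mulNr ?mulrA divrK // addNr.
- by rewrite /z mulNr ?mulrA addrC -ws mulrBr ?mulrA.
Qed.

Lemma rinv2_entriesV a b c d x y z w :
  a \is a GRing.unit -> b \is a GRing.unit -> c \is a GRing.unit -> d \is a GRing.unit ->
  rinv2 a b c d x y z w -> rinv2 x y z w a b c d ->
  [/\ x \is a GRing.unit, y \is a GRing.unit, z \is a GRing.unit, w \is a GRing.unit &
      [/\ x^-1 = a - b * d^-1 * c, y^-1 = c - d * b^-1 * a,
          z^-1 = b - a * c^-1 * d & w^-1 = d - c * a^-1 * b]].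
Proof.
move=> Ua Ub Uc Ud h1 h2.
have [Ux Ex] := rinv2_schur_corner Ud (rinv2_swap_rows (rinv2_swap_cols h1))
                                      (rinv2_swap_cols (rinv2_swap_rows h2)).
have [Uy Ey] := rinv2_schur_corner Ub (rinv2_swap_cols h1) (rinv2_swap_rows h2).
have [Uz Ez] := rinv2_schur_corner Uc (rinv2_swap_rows h1) (rinv2_swap_cols h2).
have [Uw Ew] := rinv2_schur_corner Ua h1 h2.
by [].
Qed.

Lemma unit_delta_inv a b c d : a \is a GRing.unit -> d \is a GRing.unit ->
  (d^-1 / c^-1 - b^-1 / a^-1 \is a GRing.unit) = (d / b - c / a \is a GRing.unit).
Proof.
move=> Ua Ud; have -> : d^-1 / c^-1 - b^-1 / a^-1 = - (d^-1 * (d / b - c / a) * a).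
  by rewrite !invrK mulrBr mulrBl !mulrA mulVr // mul1r divrK // opprB.
by rewrite rpredN unitrMl // unitrMr ?rpredV.
Qed.

(* Both sides equal 2 - a^-1 b d^-1 c - c^-1 d b^-1 a. *)
Lemma cross_schur_eq a b c d :
  a \is a GRing.unit -> b \is a GRing.unit -> c \is a GRing.unit -> d \is a GRing.unit ->
  (a^-1 - c^-1 * d * b^-1) * (a - b * d^-1 * c) =
  (c^-1 - a^-1 * b * d^-1) * (c - d * b^-1 * a).
Proof.
move=> Ua Ub Uc Ud.
rewrite !mulrBl !mulrBr !mulrA (divrK Ub) (divrK Ud) (mulrK Ud) (mulrK Ub) !mulVr //.
by rewrite !opprB addrC.
Qed.

End RightInverse2.

Section Matrix2.
Variable R : unitRingType.
Implicit Types A B V X Y : 'M[R]_2.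

Lemma ord2P (i : 'I_2) : i = 0 \/ i = 1.
Proof. by case: i => [[|[|//]] ?]; [left | right]; apply: val_inj. Qed.

Lemma matrix2P A B :
  A = B <-> [/\ A 0 0 = B 0 0, A 0 1 = B 0 1, A 1 0 = B 1 0 & A 1 1 = B 1 1].
Proof.
split=> [-> // | [e00 e01 e10 e11]]; apply/matrixP => i j.
by case: (ord2P i) => ->; case: (ord2P j) => ->.
Qed.

Lemma mulmx2E A B i j : (A *m B) i j = A i 0 * B 0 j + A i 1 * B 1 j.
Proof.
rewrite mxE big_ord_recl big_ord1.
by have -> : lift ord0 ord0 = 1 :> 'I_2 by apply: val_inj.
Qed.

Lemma mulmx2_eq1 A B : A *m B = 1%:M <->
  rinv2 (A 0 0) (A 0 1) (A 1 0) (A 1 1) (B 0 0) (B 0 1) (B 1 0) (B 1 1).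
Proof. by rewrite matrix2P !mulmx2E !mxE /=; split; case=> *; split. Qed.

Lemma is_invE A B : is_inv A B <->
  rinv2 (A 0 0) (A 0 1) (A 1 0) (A 1 1) (B 0 0) (B 0 1) (B 1 0) (B 1 1) /\
  rinv2 (B 0 0) (B 0 1) (B 1 0) (B 1 1) (A 0 0) (A 0 1) (A 1 0) (A 1 1).
Proof. by rewrite /is_inv !mulmx2_eq1. Qed.

Lemma is_invC A B : is_inv A B -> is_inv B A.
Proof. by case. Qed.

Lemma is_inv_uniq A B B' : is_inv A B -> is_inv A B' -> B = B'.
Proof. by move=> [_ BA] [AB' _]; rewrite -[B]mulmx1 -AB' mulmxA BA mul1mx. Qed.

Lemma allunits2P A : allunits2 A <->
  [/\ A 0 0 \is a GRing.unit, A 0 1 \is a GRing.unit,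
      A 1 0 \is a GRing.unit & A 1 1 \is a GRing.unit].
Proof.
split=> [/forallP UA | [U00 U01 U10 U11]].
  have UAij i j : A i j \is a GRing.unit by move/forallP: (UA i); apply.
  by split; apply: UAij.
apply/forallP => i; apply/forallP => j.
by case: (ord2P i) => ->; case: (ord2P j) => ->.
Qed.

Definition mx2 (x y z w : R) : 'M[R]_2 :=
  \matrix_(i, j) if i == 0 then if j == 0 then x else y else if j == 0 then z else w.

Definition schur2 A := A 1 1 - A 1 0 * (A 0 0)^-1 * A 0 1.

Lemma invertible2_schur A : A 0 0 \is a GRing.unit ->
  invertible2 A <-> schur2 A \is a GRing.unit.
Proof.
rewrite /schur2 => Ua; split=> [[V /is_invE [AV VA]] | Us].
  by have [Uw <-] := rinv2_schur_corner Ua AV VA; rewrite rpredV.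
have [AV VA] := rinv2_schur Ua Us.
apply: (ex_intro _ (mx2 _ _ _ _)); apply/is_invE; rewrite !mxE /=.
by split; [exact: AV | exact: VA].
Qed.

Lemma invertible2_delta A : allunits2 A ->
  invertible2 A <-> A 1 1 / A 0 1 - A 1 0 / A 0 0 \is a GRing.unit.
Proof.
case/allunits2P=> Ua Ub _ _; rewrite invertible2_schur //.
have -> : A 1 1 / A 0 1 - A 1 0 / A 0 0 = schur2 A / A 0 1.
  by rewrite /schur2 mulrBl (mulrK Ub).
by rewrite unitrMl ?rpredV.
Qed.

Definition J2mx A : 'M[R]_2 := \matrix_(j, k) (A k j)^-1.

Lemma J2mxK A : J2mx (J2mx A) = A.
Proof. by apply/matrixP => i j; rewrite !mxE invrK. Qed.

Lemma allunits2_J2mx A : allunits2 (J2mx A) = allunits2 A.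
Proof.
apply/idP/idP => /allunits2P; rewrite ?mxE ?unitrV => -[*];
  apply/allunits2P; rewrite ?mxE ?unitrV //.
Qed.

Lemma invertible2_J2mx A : allunits2 A -> invertible2 (J2mx A) <-> invertible2 A.
Proof.
move=> UA; have UA' := UA; rewrite -allunits2_J2mx in UA'.
rewrite (invertible2_delta UA) (invertible2_delta UA') !mxE.
by case/allunits2P: UA => Ua _ _ Ud; rewrite unit_delta_inv.
Qed.

Lemma is_inv_allunits2 A V : allunits2 A -> is_inv A V -> allunits2 V.
Proof.
move=> /allunits2P [Ua Ub Uc Ud] /is_invE [AV VA].
by have [Ux Uy Uz Uw _] := rinv2_entriesV Ua Ub Uc Ud AV VA; apply/allunits2P.
Qed.

Lemma J2mx_inv_entries A V : allunits2 A -> is_inv A V ->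
  [/\ J2mx V 0 0 = A 0 0 - A 0 1 * (A 1 1)^-1 * A 1 0,
      J2mx V 0 1 = A 0 1 - A 0 0 * (A 1 0)^-1 * A 1 1,
      J2mx V 1 0 = A 1 0 - A 1 1 * (A 0 1)^-1 * A 0 0 &
      J2mx V 1 1 = A 1 1 - A 1 0 * (A 0 0)^-1 * A 0 1].
Proof.
move=> /allunits2P [Ua Ub Uc Ud] /is_invE [AV VA].
by have [_ _ _ _ [Ex Ey Ez Ew]] := rinv2_entriesV Ua Ub Uc Ud AV VA; rewrite !mxE.
Qed.

Lemma dsim_col_scale X Y : allunits2 X -> allunits2 Y ->
  (Y 0 0)^-1 * X 0 0 = (Y 1 0)^-1 * X 1 0 ->
  (Y 0 1)^-1 * X 0 1 = (Y 1 1)^-1 * X 1 1 -> dsim X Y.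
Proof.
move=> /allunits2P [Ux00 Ux01 Ux10 Ux11] /allunits2P [Uy00 Uy01 Uy10 Uy11] e0 e1.
have rescale (x y : R) : x \is a GRing.unit -> y \is a GRing.unit -> x * (y^-1 * x)^-1 = y.
  by move=> Ux Uy; rewrite invrM ?rpredV // invrK mulVKr.
pose s0 := ((Y 0 0)^-1 * X 0 0)^-1; pose s1 := ((Y 0 1)^-1 * X 0 1)^-1.
have Us0 : s0 \is a GRing.unit by rewrite !rpredV rpredM ?rpredV.
have Us1 : s1 \is a GRing.unit by rewrite !rpredV rpredM ?rpredV.
exists 1%:M, 1%:M, (diag_mx (\row_j if j == 0 then s0 else s1)); split.
- exact: scalar_mx_is_diag.
- exact: diag_mx_is_diag.
- by split; rewrite mulmx1.
- exists (diag_mx (\row_j if j == 0 then s0^-1 else s1^-1)); apply/is_invE.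
  rewrite !mxE /= !mulr1n !mulr0n.
  by split; split; rewrite ?mulr0 ?mul0r ?addr0 ?add0r ?divrr ?mulVr.
- rewrite mul1mx mul_mx_diag; apply/matrix2P; rewrite !mxE /=.
  by rewrite /s0 /s1 {2}e0 {2}e1 !rescale.
Qed.

End Matrix2.

Section PartialMaps.
Variable R : unitRingType.
Implicit Types A B V X Y : 'M[R]_2.

Lemma J1E A V : J1 A = Some V <-> is_inv A V.
Proof.
rewrite /J1; case: excluded_middle_informative => [invA | ninvA]; last first.
  by split=> // AV; case: ninvA; exists V.
case: constructive_indefinite_description => W AW /=.
by split=> [[<-] // | AV]; rewrite (is_inv_uniq AW AV).
Qed.

Lemma JE A B : J A = Some B <-> exists V, [/\ is_inv A V, allunits2 V & B = J2mx V].
Proof.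
rewrite /J; case EA: (J1 A) => [V|] /=; last first.
  by split=> // -[V [/J1E AV _ _]]; rewrite AV in EA.
move/J1E: EA => AV; rewrite /J2; case UV: (allunits2 V).
  by split=> [[<-] | [W [AW _ ->]]]; [exists V | rewrite (is_inv_uniq AV AW)].
by split=> // -[W [AW UW _]]; rewrite (is_inv_uniq AV AW) UW in UV.
Qed.

Lemma JinvE A Y : Jinv A = Some Y <-> allunits2 A /\ is_inv (J2mx A) Y.
Proof.
rewrite /Jinv /J2; case: (allunits2 A) => /=; last by split=> // -[].
by rewrite J1E; split=> [|[]].
Qed.

Lemma domJ A : dom (@J R) A <-> invertible2 A /\ allunits2 A.
Proof.
split=> [[B /JE [V [AV UV _]]] | [[V AV] UA]].
  by split; [exists V | apply: is_inv_allunits2 (is_invC AV)].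
by exists (J2mx V); apply/JE; exists V; split=> //; apply: is_inv_allunits2 AV.
Qed.

Lemma domJinv A : dom (@Jinv R) A <-> invertible2 A /\ allunits2 A.
Proof.
split=> [[Y /JinvE [UA AY]] | [invA UA]].
  by split=> //; apply/(invertible2_J2mx UA); exists Y.
have [Y AY] := (invertible2_J2mx UA).2 invA.
by exists Y; apply/JinvE.
Qed.

Lemma J_dom A B : J A = Some B -> dom (@J R) B.
Proof.
move=> /JE [V [AV UV ->]]; apply/domJ; rewrite allunits2_J2mx.
by split=> //; apply/(invertible2_J2mx UV); exists A; apply: is_invC.
Qed.

Lemma J_inj A A' B : J A = Some B -> J A' = Some B -> A = A'.
Proof.
move=> /JE [V [AV _ ->]] /JE [V' [AV' _ /(congr1 (@J2mx R))]].
rewrite !J2mxK => EV; rewrite EV in AV.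
exact: is_inv_uniq (is_invC AV) (is_invC AV').
Qed.

Lemma J_surj B : dom (@J R) B -> exists A, J A = Some B.
Proof.
case/domJ=> invB UB; have [A JBA] := (invertible2_J2mx UB).2 invB.
exists A; apply/JE; exists (J2mx B); split; first exact: is_invC.
  by rewrite allunits2_J2mx.
by rewrite J2mxK.
Qed.

Lemma J_formula A : invertible2 A -> allunits2 A ->
  exists B, J A = Some B /\
    [/\ B 0 0 = A 0 0 - A 0 1 * (A 1 1)^-1 * A 1 0,
        B 0 1 = A 0 1 - A 0 0 * (A 1 0)^-1 * A 1 1,
        B 1 0 = A 1 0 - A 1 1 * (A 0 1)^-1 * A 0 0 &
        B 1 1 = A 1 1 - A 1 0 * (A 0 0)^-1 * A 0 1].
Proof.
move=> [V AV] UA; exists (J2mx V); split; last exact: J2mx_inv_entries AV.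
by apply/JE; exists V; split=> //; apply: is_inv_allunits2 AV.
Qed.

Lemma J_dsim_Jinv A X Y : J A = Some X -> Jinv A = Some Y -> dsim X Y.
Proof.
move=> /JE [V [AV UV ->]] /JinvE [UA AY].
have UA' : allunits2 (J2mx A) by rewrite allunits2_J2mx.
have UY := is_inv_allunits2 UA' AY.
have [X00 X01 X10 X11] := J2mx_inv_entries UA AV.
have [Y00 Y01 Y10 Y11] := J2mx_inv_entries UA' AY.
rewrite !mxE !invrK in Y00 Y01 Y10 Y11.
case/allunits2P: UA => Ua Ub Uc Ud.
apply: dsim_col_scale; rewrite ?allunits2_J2mx //.
  by rewrite Y00 Y01 X00 X10 cross_schur_eq.
by rewrite Y10 Y11 X01 X11 cross_schur_eq.
Qed.

Lemma domJ_units A : dom (@J R) A <->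
  [/\ A 0 0 \is a GRing.unit, A 0 1 \is a GRing.unit, A 1 0 \is a GRing.unit,
      A 1 1 \is a GRing.unit & A 1 1 / A 0 1 - A 1 0 / A 0 0 \is a GRing.unit].
Proof.
rewrite domJ; split=> [[invA UA] | [Ua Ub Uc Ud UD]].
  by case/allunits2P: (UA) => *; split=> //; apply/(invertible2_delta UA).
have UA : allunits2 A by apply/allunits2P.
by split=> //; apply/(invertible2_delta UA).
Qed.

End PartialMaps.

Theorem proposition2 (R : unitRingType) :
  (forall A : 'M[R]_2, dom (@J R) A <-> invertible2 A /\ allunits2 A) /\
  (forall A : 'M[R]_2, dom (@Jinv R) A <-> invertible2 A /\ allunits2 A) /\
  (forall A B : 'M[R]_2, J A = Some B -> dom (@J R) B) /\
  (forall A A' B : 'M[R]_2, J A = Some B -> J A' = Some B -> A = A') /\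
  (forall B : 'M[R]_2, dom (@J R) B -> exists A, J A = Some B) /\
  (forall A : 'M[R]_2, invertible2 A -> allunits2 A ->
     let a := A 0 0 in let b := A 0 1 in let c := A 1 0 in let d := A 1 1 in
     exists B : 'M[R]_2, J A = Some B /\
       [/\ B 0 0 = a - b * d^-1 * c, B 0 1 = b - a * c^-1 * d,
           B 1 0 = c - d * b^-1 * a & B 1 1 = d - c * a^-1 * b]) /\
  (forall A X Y : 'M[R]_2, dom (@J R) A -> J A = Some X -> Jinv A = Some Y ->
     dsim X Y) /\
  (forall A : 'M[R]_2,
     let a := A 0 0 in let b := A 0 1 in let c := A 1 0 in let d := A 1 1 in
     dom (@J R) A <->
     [/\ a \is a GRing.unit, b \is a GRing.unit, c \is a GRing.unit,
         d \is a GRing.unit & d * b^-1 - c * a^-1 \is a GRing.unit]).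
Proof.
split; first exact: domJ.
split; first exact: domJinv.
split; first exact: J_dom.
split; first exact: J_inj.
split; first exact: J_surj.
split; first exact: J_formula.
split; first by move=> A X Y _; apply: J_dsim_Jinv.
exact: domJ_units.
Qed.
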